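(* Let $\delta$ be the differential defined in the context. Then: (1) $\ker(\delta:\mathfrak{lie}_1\to\mathfrak{lie}_2)=\mathfrak{lie}_1$; (2) $\ker(\delta:\mathfrak{tr}_1\to\mathfrak{tr}_2)=k\,\mathrm{Tr}(x)$; (3) $\ker(\delta:\mathfrak{lie}_2\to\mathfrak{lie}_3)/\mathrm{im}(\delta:\mathfrak{lie}_1\to\mathfrak{lie}_2)$ is one-dimensional, spanned by the class of $[x,y]$; (4) $\ker(\delta:\mathfrak{tr}_2\to\mathfrak{tr}_3)=\mathrm{im}(\delta:\mathfrak{tr}_1\to\mathfrak{tr}_2)$.
   Context: Let $k$ be a field of characteristic zero. For $n\ge 1$, $\mathfrak{lie}_n$ is the degree completion of the free Lie algebra over $k$ on generators $x_1,\dots,x_n$ (graded by word length), and $\mathrm{Ass}_n$ is the degree completion of the free associative algebra on $x_1,\dots,x_n$; for small $n$ the generators are written $x,y,z,w$. Let $\mathrm{Ass}_n^+$ be its part of positive degree and $\mathfrak{tr}_n=\mathrm{Ass}_n^+/\langle ab-ba : a,b\in\mathrm{Ass}_n\rangle$ (quotient by the closed span of commutators), a graded vector space; $\mathrm{Tr}:\mathrm{Ass}_n\to\mathfrak{tr}_n$ denotes the projection (killing constants). For an element $f(x_1,\dots,x_n)$ of $\mathfrak{lie}_n$ or $\mathfrak{tr}_n$, expressions such as $f(x_1,\dots,x_i+x_{i+1},\dots,x_{n+1})$ denote the image under the continuous algebra homomorphism substituting the indicated elements for the generators. The differential $\delta:\mathfrak{lie}_n\to\mathfrak{lie}_{n+1}$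 (and likewise $\delta:\mathfrak{tr}_n\to\mathfrak{tr}_{n+1}$) is $(\delta f)(x_1,\dots,x_{n+1})=f(x_2,\dots,x_{n+1})+\sum_{i=1}^n(-1)^i f(x_1,\dots,x_i+x_{i+1},\dots,x_{n+1})+(-1)^{n+1}f(x_1,\dots,x_n)$. *)

From HB Require Import structures.
From mathcomp Require Import all_boot all_order all_algebra.
Set Implicit Arguments. Unset Strict Implicit. Unset Printing Implicit Defensive.
Import Order.TTheory GRing.Theory Num.Theory.
Local Open Scope ring_scope.

(* Elements of the degree completion Ass_n of the free associative algebra
   k<<x_0,...,x_{n-1}>>: formal noncommutative power series, i.e. arbitrary
   coefficient functions on words (seq 'I_n). *)
Definition series (K : Type) (n : nat) := seq 'I_n -> K.

Section Series.
Context {K : fieldType}.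

Definition szero {n} : series K n := fun _ => 0.
Definition sadd {n} (f g : series K n) : series K n := fun w => f w + g w.
Definition sopp {n} (f : series K n) : series K n := fun w => - f w.
Definition sscale {n} (c : K) (f : series K n) : series K n := fun w => c * f w.
Definition smul {n} (f g : series K n) : series K n :=
  fun w => \sum_(i < (size w).+1) f (take i w) * g (drop i w).
Definition sbr {n} (f g : series K n) : series K n :=
  fun w => smul f g w - smul g f w.
Definition gen {n} (i : 'I_n) : series K n := fun w => (w == [:: i])%:R.
Definition hom {n} (d : nat) (f : series K n) : series K n :=
  fun w => if size w == d then f w else 0.

(* Continuous algebra homomorphism Ass_n -> Ass_m given by the linear
   substitution x_j |-> \sum_l M j l * x_l. *)
Definition lsubst {n m} (M : 'I_n -> 'I_m -> K) (f : series K n) : series K m :=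
  fun w => \sum_(t : (size w).-tuple 'I_n)
             f t * \prod_(i < size w) M (tnth t i) (tnth (in_tuple w) i).

(* The i-th face substitution 'I_n -> 'I_n.+1 (0 <= i <= n+1):
   i = 0     : x_j |-> x_{j+1}                     (f(x_2,...,x_{n+1}))
   1<=i<=n   : x_j |-> x_j (j < i), x_i |-> x_i + x_{i+1}, x_j |-> x_{j+1} (j > i)
               (1-based indices; f(x_1,..,x_i+x_{i+1},..,x_{n+1}))
   i = n+1   : x_j |-> x_j                          (f(x_1,...,x_n)) *)
Definition face (n i : nat) (j : 'I_n) (l : 'I_n.+1) : K :=
  (if (j.+1 < i)%N then (l : nat) == j
   else if j.+1 == i then ((l : nat) == j) || ((l : nat) == j.+1)
   else (l : nat) == j.+1)%:R.

(* The differential delta : Ass_n -> Ass_{n+1} (restricting to lie_n / inducing on tr_n) *)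
Definition delta {n} (f : series K n) : series K n.+1 :=
  fun w => \sum_(i < n.+2) (-1) ^+ i * lsubst (@face n i) f w.

(* Lie polynomials: the Lie subalgebra of the free associative algebra
   generated by the x_i (= the free Lie algebra, embedded in Ass_n). *)
Inductive lie_poly {n} : series K n -> Prop :=
  | lp_gen i : lie_poly (gen i)
  | lp_zero : lie_poly szero
  | lp_add f g : lie_poly f -> lie_poly g -> lie_poly (sadd f g)
  | lp_scale c f : lie_poly f -> lie_poly (sscale c f)
  | lp_br f g : lie_poly f -> lie_poly g -> lie_poly (sbr f g).

(* Elements of lie_n = degree completion of the free Lie algebra:
   series all of whose homogeneous components are Lie polynomials. *)
Definition is_lie {n} (f : series K n) : Prop := forall d, lie_poly (hom d f).

Definition spos {n} (f : series K n) : series K n :=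
  fun w => if w is [::] then 0 else f w.

(* f lies in the closure (for the degree topology) of the span of
   commutators ab - ba, a, b in Ass_n. *)
Definition in_comm_closure {n} (f : series K n) : Prop :=
  forall N : nat, exists s : seq (series K n * series K n),
    forall w, (size w <= N)%N ->
      f w = \sum_(p <- s) (smul p.1 p.2 w - smul p.2 p.1 w).

(* Tr f = 0 in tr_n = Ass_n^+ / closure of commutators *)
Definition tr_zero {n} (f : series K n) : Prop := in_comm_closure (spos f).

End Series.

(* Let cycsum v h be the sum of the coefficients of h on the rotations of the
   word v.  A commutator has vanishing cyclic sums, and conversely h is its
   average over rotations modulo the commutators w - rot k w of monomials; so in
   characteristic zero Tr h = 0 iff all cyclic sums of h on nonempty words
   vanish.  Lie elements vanish at the empty word and, being brackets, have
   vanishing cyclic sums in degree >= 2: in one variable only the multiples of x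
   remain, and delta kills them.
   In two variables every face of delta is a letter map, so that
   delta f w = [z in w] f(w[y,z := y]) - [x in w] f(w[x,y := x]).  Hence an f
   with delta f = 0 vanishes on nonempty powers of one letter and is constant
   on the words of each length >= 3 containing both letters.  For a Lie f this
   constant is killed by a cyclic sum, leaving the degree-2 part, a multiple of
   [x,y].  For traces, the cyclic symmetrization cyc f commutes with delta, and
   once delta (cyc f) = 0 a primitive g is read off its value on y x^(n-1). *)

From Pilot Require Import Defs.
From HB Require Import structures.
From mathcomp Require Import all_boot all_order all_algebra.
From Stdlib Require Import FunctionalExtensionality.
From mathcomp Require Import zify ring.
Import Order.TTheory GRing.Theory Num.Theory.
Local Open Scope ring_scope.

Set Implicit Arguments.
Unset Strict Implicit.

Section CyclicSum.
Variables (K : fieldType) (n : nat).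
Implicit Types (h : series K n) (v w : seq 'I_n).

Definition cycsum v h : K := \sum_(k < size v) h (rot k v).

Definition cyc h : series K n := fun v => cycsum v h.

Lemma cycsum_rot1 v h : cycsum (rot 1 v) h = cycsum v h.
Proof.
rewrite /cycsum size_rot; case: v => [|x s]; first by rewrite !big_ord0.
rewrite big_ord_recr big_ord_recl rot0 [in RHS]addrC.
congr (_ + _).
  by apply: eq_bigr => k _; rewrite -rotD addn1 // ltnS ltnW.
by rewrite -rotD addn1 // rot_oversize.
Qed.

Lemma cycsum_rot k v h : cycsum (rot k v) h = cycsum v h.
Proof.
have [le_kv|/ltnW lt_vk] := leqP k (size v); last by rewrite rot_oversize.
elim: k le_kv => [|k IHk] lt_kv; first by rewrite rot0.
by rewrite rotS // cycsum_rot1 IHk // ltnW.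
Qed.

Lemma cycsum_rotr v h : \sum_(k < size v) h (rotr k v) = cycsum v h.
Proof.
rewrite -cycsum_rot1 /cycsum size_rot (reindex_inj rev_ord_inj) /=.
apply: eq_bigr => k _; have lt_kv := ltn_ord k.
by rewrite /rotr -rotD ?addn1 //; congr (h (rot _ v)); lia.
Qed.

Lemma cycsum_add v h1 h2 : cycsum v (sadd h1 h2) = cycsum v h1 + cycsum v h2.
Proof. exact: big_split. Qed.

Lemma cycsum_opp v h : cycsum v (sopp h) = - cycsum v h.
Proof. by rewrite /cycsum -sumrN. Qed.

Lemma cycsum_scale v c h : cycsum v (sscale c h) = c * cycsum v h.
Proof. by rewrite /cycsum mulr_sumr. Qed.

Lemma cycsum_const v h :
  (forall k, h (rot k v) = h v) -> cycsum v h = (size v)%:R * h v.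
Proof.
move=> hrot; rewrite /cycsum (eq_bigr (fun=> h v)) => [|k _]; last exact: hrot.
by rewrite sumr_const card_ord mulr_natl.
Qed.

(* Cutting the cyclic word at position [i] and at position [size v - i]
   exchanges the two factors. *)
Lemma cycsum_smulC v a b : cycsum v (smul a b) = cycsum v (smul b a).
Proof.
have cut_first (F : seq 'I_n -> seq 'I_n -> K) :
    cycsum v (fun u => \sum_(i < (size u).+1) F (take i u) (drop i u))
    = \sum_(i < (size v).+1) cycsum v (fun u => F (take i u) (drop i u)).
  by rewrite /cycsum exchange_big; apply: eq_bigr => k _; rewrite size_rot.
rewrite /smul (cut_first (fun p q => a p * b q)) (cut_first (fun p q => b p * a q)).
rewrite [RHS](reindex_inj rev_ord_inj); apply: eq_bigr => i _ /=; rewrite subSS.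
rewrite -(cycsum_rot (size v - i)) /cycsum size_rot.
apply: eq_bigr => k _; rewrite rot_rot; set u := rot k v.
have size_u : size u = size v by rewrite size_rot.
have size_drop_u : size (drop (size v - i) u) = i.
  by rewrite size_drop size_u; have := ltn_ord i; lia.
by rewrite [rot _ u]/rot take_size_cat // drop_size_cat // mulrC.
Qed.

Lemma cycsum_comm v a b : cycsum v (sbr a b) = 0.
Proof.
by rewrite -[sbr a b]/(sadd (smul a b) (sopp (smul b a))) cycsum_add cycsum_opp cycsum_smulC subrr.
Qed.

End CyclicSum.

Section TraceZero.
Variables (K : fieldType) (n : nat).
Implicit Types (a b h : series K n) (u v w : seq 'I_n).

Lemma tr_zero_cycsum h v : tr_zero h -> v != [::] -> cycsum v h = 0.
Proof.
move=> /(_ (size v)) [s hs] v_nil.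
have -> : cycsum v h = cycsum v (spos h).
  apply: eq_bigr => k _; rewrite /spos; case rkv: (rot k v) => //.
  by move: v_nil; rewrite -(size_eq0 v) -(size_rot k) rkv.
rewrite /cycsum; under eq_bigr => k _ do rewrite hs ?size_rot //.
by rewrite exchange_big big1 // => p _; exact: cycsum_comm.
Qed.

Definition mono w : series K n := fun u => (u == w)%:R.

Lemma take_drop_eq u v w (i : nat) : (i <= size u)%N ->
  (take i u == v) && (drop i u == w) = (u == v ++ w) && (i == size v).
Proof.
move=> le_iu; apply/andP/andP => [[/eqP <- /eqP <-]|[/eqP -> /eqP ->]].
  by rewrite cat_take_drop size_take_min (minn_idPl le_iu).
by rewrite take_size_cat ?drop_size_cat.
Qed.

Lemma smul_mono v w u : smul (mono v) (mono w) u = mono (v ++ w) u.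
Proof.
rewrite /smul /mono; under eq_bigr => i _ do rewrite -natrM mulnb (take_drop_eq v w (ltn_ord i)).
have [->|_] /= := eqVneq u (v ++ w); last by rewrite big1.
rewrite (eq_bigr (fun i : 'I__ => if i == size v :> nat then 1 else 0)) => [|i _].
  by rewrite -big_mkcond (big_ord1_eq _ (fun=> 1)) size_cat ltnS leq_addr.
by case: (i == _ :> nat).
Qed.

Lemma commutator_mono_rot w k u :
  smul (mono (take k w)) (mono (drop k w)) u
  - smul (mono (drop k w)) (mono (take k w)) u = mono w u - mono (rot k w) u.
Proof. by rewrite !smul_mono cat_take_drop. Qed.

Lemma smul_scale c a b u : smul (sscale c a) b u = c * smul a b u.
Proof. by rewrite /smul mulr_sumr; apply: eq_bigr => i _; rewrite mulrA. Qed.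

Lemma smul_scale_r c a b u : smul a (sscale c b) u = c * smul a b u.
Proof. by rewrite /smul mulr_sumr; apply: eq_bigr => i _; rewrite mulrCA. Qed.

Lemma sumr_eq_uniq (T : eqType) (r : seq T) t (F : T -> K) : uniq r ->
  \sum_(x <- r) (x == t)%:R * F x = (t \in r)%:R * F t.
Proof.
elim: r => [|x r IHr] /=; first by rewrite big_nil mul0r.
case/andP=> x_r /IHr {}IHr; rewrite big_cons IHr in_cons.
have [<-|_] := eqVneq x t; last by rewrite mul0r add0r.
by rewrite (negbTE x_r) mul0r addr0.
Qed.

Definition words d : seq (seq 'I_n) := [seq tval t | t : d.-tuple 'I_n].

Lemma mem_words d w : (w \in words d) = (size w == d).
Proof.
apply/mapP/eqP => [[t _ ->]|size_w]; first exact: size_tuple.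
by exists (Tuple (introT eqP size_w)); rewrite ?mem_enum.
Qed.

Lemma uniq_words d : uniq (words d).
Proof. by rewrite map_inj_uniq ?enum_uniq //; exact: val_inj. Qed.

Hypothesis pchar0 : [pchar K] =i pred0.

Lemma natf_gt0_neq0 d : (0 < d)%N -> d%:R != 0 :> K.
Proof. by move=> d_gt0; rewrite ((pcharf0P K).1 pchar0) -lt0n. Qed.

Lemma natf_mul_eq0 d (x : K) : (0 < d)%N -> d%:R * x = 0 -> x = 0.
Proof. by move=> /natf_gt0_neq0 d_neq0 /eqP; rewrite mulf_eq0 (negbTE d_neq0) => /eqP. Qed.

Definition rot_commutator d h w k : series K n * series K n :=
  (sscale (h w / d%:R) (mono (take k w)), mono (drop k w)).

(* Since mono w - mono (rot k w) is a commutator, summing these commutators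
   over the words w of length d and all cut points k replaces h, in length d,
   by h minus its average over rotations. *)
Lemma sum_rot_commutators d h u : (0 < d)%N ->
  \sum_(w <- words d) \sum_(0 <= k < d)
    (smul (rot_commutator d h w k).1 (rot_commutator d h w k).2 u
     - smul (rot_commutator d h w k).2 (rot_commutator d h w k).1 u)
  = (size u == d)%:R * (h u - cycsum u h / d%:R).
Proof.
move=> d_gt0; have d_neq0 := natf_gt0_neq0 d_gt0.
rewrite (eq_bigr (fun w => (w == u)%:R * h w
    - \sum_(k < d) (w == rotr k u)%:R * (h w / d%:R))) => [|w _]; last first.
  rewrite big_mkord; under eq_bigr => k _ do
    rewrite smul_scale smul_scale_r -mulrBr commutator_mono_rot.
  rewrite -mulr_sumr sumrB sumr_const card_ord -[mono w u *+ d]mulr_natr.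
  rewrite mulrBr mulrCA divfK // mulr_sumr /mono eq_sym; congr (_ - _).
  apply: eq_bigr => k _; rewrite mulrC; congr ((nat_of_bool _)%:R * _).
  by apply/eqP/eqP => [->|->]; rewrite ?rotK ?rotrK.
rewrite sumrB (sumr_eq_uniq _ _ (uniq_words d)) mem_words exchange_big /=.
under eq_bigr => k _ do
  rewrite (sumr_eq_uniq _ (fun w => h w / d%:R) (uniq_words d)) mem_words size_rotr.
have [<-|_] := eqVneq (size u) d; last by rewrite !mul0r big1 ?subr0 // => k _; rewrite mul0r.
by under eq_bigr => k _ do rewrite mul1r; rewrite -mulr_suml cycsum_rotr !mul1r.
Qed.

Lemma cycsum_tr_zero h : (forall v, v != [::] -> cycsum v h = 0) -> tr_zero h.
Proof.
move=> cycsum0 N; exists (flatten [seq [seq rot_commutator d h w k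
    | w <- words d, k <- index_iota 0 d] | d <- index_iota 1 N.+1]) => u le_uN.
rewrite big_flatten big_map (eq_big_nat _ _ (F2 := fun d => (d == size u)%:R * h u)).
  rewrite (sumr_eq_uniq _ (fun=> h u) (iota_uniq _ _)) mem_index_iota ltnS le_uN.
  by rewrite /spos; case: (u) => [|x w] /=; rewrite ?mul0r ?mul1r.
move=> d /andP[d_gt0 _]; rewrite big_allpairs_dep sum_rot_commutators // eq_sym.
have [size_u|_] := eqVneq (size u) d; last by rewrite !mul0r.
by rewrite cycsum0 ?mul0r ?subr0 // -size_eq0 size_u -lt0n.
Qed.

Lemma tr_zeroP h : tr_zero h <-> forall v, v != [::] -> cycsum v h = 0.
Proof. by split=> [/tr_zero_cycsum|/cycsum_tr_zero]. Qed.

End TraceZero.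

Lemma word1_nseq (w : seq 'I_1) : w = nseq (size w) ord0.
Proof. by elim: w => //= x w {1}->; rewrite (ord1 x). Qed.

Lemma cycsum1 (K : fieldType) v (h : series K 1) : cycsum v h = (size v)%:R * h v.
Proof. by apply: cycsum_const => k; rewrite (word1_nseq (rot k v)) size_rot -word1_nseq. Qed.

Lemma I2_cases (a : 'I_2) : a = ord0 \/ a = ord_max.
Proof. by case: a => [[|[|a]] lt_a2] //; [left|right]; exact: val_inj. Qed.

Lemma word2_nseq0 (u : seq 'I_2) : ord_max \notin u -> u = nseq (size u) ord0.
Proof.
move=> u_x; apply/all_pred1P/allP => c c_u.
by case: (I2_cases c) c_u => -> // u_y; rewrite u_y in u_x.
Qed.

Lemma word2_nseq_max (u : seq 'I_2) : ord0 \notin u -> u = nseq (size u) ord_max.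
Proof.
move=> u_y; apply/all_pred1P/allP => c c_u.
by case: (I2_cases c) c_u => -> // u_x; rewrite u_x in u_y.
Qed.

Definition l1 : 'I_3 := Ordinal (isT : (1 < 3)%N).

Lemma I3_cases (l : 'I_3) : [\/ l = ord0, l = l1 | l = ord_max].
Proof.
case: l => [[|[|[|l]]] lt_l3] //; [apply: Or31|apply: Or32|apply: Or33]; exact: val_inj.
Qed.

Section Faces.
Variable K : fieldType.

Lemma prod_nat_bool (T : Type) (r : seq T) (p : pred T) :
  \prod_(x <- r) ((p x)%:R : K) = (all p r)%:R.
Proof. by elim: r => [|x r IHr]; rewrite ?big_nil // big_cons IHr -natrM mulnb. Qed.

Lemma lsubst_letters n m (M : 'I_n -> 'I_m -> K) (sig : 'I_m -> 'I_n)
    (r : pred 'I_m) (f : series K n) w :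
  (forall j l, M j l = ((j == sig l) && r l)%:R) ->
  lsubst M f w = (all r w)%:R * f (map sig w).
Proof.
move=> M_letters; rewrite /lsubst (bigD1 [tuple of map sig (in_tuple w)]) //=.
rewrite [X in _ + X]big1 ?addr0 => [|t t_neq].
  rewrite mulrC -prod_nat_bool (big_tnth _ _ w); congr (_ * _).
  by apply: eq_bigr => i _; rewrite M_letters tnth_map eqxx.
have [i sig_neq|t_eq] := pickP (fun i => tnth t i != sig (tnth (in_tuple w) i)).
  by rewrite (bigD1 i) //= M_letters (negbTE sig_neq) mul0r mulr0.
case/eqP: t_neq; apply: eq_from_tnth => i; rewrite tnth_map.
by apply/eqP; rewrite -[_ == _]negbK t_eq.
Qed.

Definition contract01 (l : 'I_3) : 'I_2 := if l == ord_max then ord_max else ord0.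
Definition contract12 (l : 'I_3) : 'I_2 := if l == ord0 then ord0 else ord_max.

Lemma all_neq (T : eqType) (a : T) s : all (fun x => x != a) s = (a \notin s).
Proof. by rewrite -has_pred1 -all_predC. Qed.

Lemma delta1E (g : series K 1) w :
  delta g w = (1 - (ord0 \in w)%:R - (ord_max \in w)%:R) * g (nseq (size w) ord0).
Proof.
have face0 j l : @face K 1 0 j l = ((j == ord0) && (l != ord0))%:R.
  by case: j => [[|j] ?]; case: l => [[|[|l]] ?].
have face1 j l : @face K 1 1 j l = ((j == ord0) && xpredT l)%:R.
  by case: j => [[|j] ?]; case: l => [[|[|l]] ?].
have face2 j l : @face K 1 2 j l = ((j == ord0) && (l != ord_max))%:R.
  by case: j => [[|j] ?]; case: l => [[|[|l]] ?].
rewrite /delta !big_ord_recl big_ord0 /=.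
rewrite (lsubst_letters _ _ face0) (lsubst_letters _ _ face1) (lsubst_letters _ _ face2).
rewrite !all_neq all_predT (word1_nseq (map _ w)) size_map.
by case: (_ \in w); case: (_ \in w); rewrite /=; ring.
Qed.

Lemma delta2E (f : series K 2) w :
  delta f w = (ord_max \in w)%:R * f (map contract12 w)
              - (ord0 \in w)%:R * f (map contract01 w).
Proof.
have face0 j l : @face K 2 0 j l = ((j == contract01 l) && (l != ord0))%:R.
  by case: j => [[|[|j]] ?]; case: l => [[|[|[|l]]] ?].
have face1 j l : @face K 2 1 j l = ((j == contract01 l) && xpredT l)%:R.
  by case: j => [[|[|j]] ?]; case: l => [[|[|[|l]]] ?].
have face2 j l : @face K 2 2 j l = ((j == contract12 l) && xpredT l)%:R.
  by case: j => [[|[|j]] ?]; case: l => [[|[|[|l]]] ?].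
have face3 j l : @face K 2 3 j l = ((j == contract12 l) && (l != ord_max))%:R.
  by case: j => [[|[|j]] ?]; case: l => [[|[|[|l]]] ?].
rewrite /delta !big_ord_recl big_ord0 /=.
rewrite (lsubst_letters _ _ face0) (lsubst_letters _ _ face1).
rewrite (lsubst_letters _ _ face2) (lsubst_letters _ _ face3) !all_neq all_predT.
by case: (_ \in w); case: (_ \in w); rewrite /=; ring.
Qed.

Lemma cycsum_delta1 (g : series K 1) u : cycsum u (delta g) = (size u)%:R * delta g u.
Proof. by apply: cycsum_const => k; rewrite !delta1E !mem_rot size_rot. Qed.

Lemma cycsum_delta2 (f : series K 2) v : cycsum v (delta f) = delta (cyc f) v.
Proof.
rewrite delta2E /cyc /cycsum !size_map !mulr_sumr -sumrB; apply: eq_bigr => k _.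
by rewrite delta2E !mem_rot !map_rot.
Qed.

Lemma mem_map_I3 (f : 'I_3 -> 'I_2) a w : (a \in map f w) =
  [|| (f ord0 == a) && (ord0 \in w), (f l1 == a) && (l1 \in w)
    | (f ord_max == a) && (ord_max \in w)].
Proof.
apply/mapP/or3P => [[l l_w ->]|].
  by case: (I3_cases l) l_w => -> l_w; [apply: Or31|apply: Or32|apply: Or33];
     rewrite eqxx.
by case=> /andP[/eqP <- l_w]; eexists; eauto.
Qed.

Lemma delta_delta1 (g : series K 1) : delta (delta g) = szero.
Proof.
apply: functional_extensionality => w; rewrite delta2E !delta1E !size_map !mem_map_I3 /=.
by case: (ord0 \in w); case: (l1 \in w); case: (ord_max \in w); rewrite /szero /=; ring.
Qed.

End Faces.

Section LieElements.
Variables (K : fieldType) (n : nat).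
Implicit Types (f : series K n) (v : seq 'I_n).

Lemma lie_poly_nil f : lie_poly f -> f [::] = 0.
Proof.
elim=> [i| |f1 f2 _ f1_nil _ f2_nil|c f1 _ f1_nil|f1 f2 _ f1_nil _ f2_nil] //.
- by rewrite /sadd f1_nil f2_nil addr0.
- by rewrite /sscale f1_nil mulr0.
- by rewrite /sbr /smul !big_ord1 f1_nil mul0r mulr0 subrr.
Qed.

Lemma lie_poly_cycsum f v : lie_poly f -> (2 <= size v)%N -> cycsum v f = 0.
Proof.
move=> lie_f; elim: lie_f v => [i| |f1 f2 _ IH1 _ IH2|c f1 _ IH1|f1 f2 _ _ _ _] v size_v.
- rewrite /cycsum big1 // => k _; rewrite /gen.
  by case: eqP => // rkv; move: size_v; rewrite -(size_rot k v) rkv.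
- by rewrite /cycsum big1.
- by rewrite cycsum_add IH1 // IH2 // addr0.
- by rewrite cycsum_scale IH1 // mulr0.
- exact: cycsum_comm.
Qed.

Lemma is_lie_nil f : is_lie f -> f [::] = 0.
Proof. by move/(_ 0%N)/lie_poly_nil. Qed.

Lemma is_lie_cycsum f v : is_lie f -> (2 <= size v)%N -> cycsum v f = 0.
Proof.
move=> /(_ (size v))/lie_poly_cycsum hom_f /hom_f <-.
by apply: eq_bigr => k _; rewrite /Defs.hom size_rot eqxx.
Qed.

Lemma is_lie_homogeneous f d :
  lie_poly f -> (forall w, size w != d -> f w = 0) -> is_lie f.
Proof.
move=> lie_f f_hom e; have [<-|e_neq] := eqVneq d e.
  have -> : Defs.hom d f = f.
    by apply: functional_extensionality => w; rewrite /Defs.hom; case: eqP => // /eqP /f_hom.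
  exact: lie_f.
have -> : Defs.hom e f = szero.
  apply: functional_extensionality => w; rewrite /Defs.hom; case: eqP => // size_w.
  by rewrite f_hom // size_w eq_sym.
exact: lp_zero.
Qed.

Lemma is_lie_szero : is_lie (@szero K n).
Proof. exact: (is_lie_homogeneous (d := 0) lp_zero (fun _ _ => erefl)). Qed.

End LieElements.

Section DegreeOne.
Variable K : fieldType.
Hypothesis pchar0 : [pchar K] =i pred0.

Lemma tr_zero1P (h : series K 1) : tr_zero h <-> forall w, w != [::] -> h w = 0.
Proof.
rewrite tr_zeroP //; split=> h0 w w_nil; have := h0 w w_nil.
  by rewrite cycsum1 => /(natf_mul_eq0 pchar0); apply; rewrite lt0n size_eq0.
by rewrite cycsum1 => ->; rewrite mulr0.
Qed.

Lemma delta1_coef_pure (u : seq 'I_2) : u != [::] ->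
  ~~ ((ord0 \in u) && (ord_max \in u)) -> 1 - (ord0 \in u)%:R - (ord_max \in u)%:R = 0 :> K.
Proof.
case: u => // a u _; case: (I2_cases a) => ->; rewrite mem_head ?andbT /= => /negbTE -> /=; ring.
Qed.

Lemma is_lie1_nseq (f : series K 1) d : is_lie f -> f (nseq d.+2 ord0) = 0.
Proof.
move=> lie_f; have := @is_lie_cycsum K 1 f (nseq d.+2 ord0) lie_f.
by rewrite cycsum1 size_nseq => /(_ isT)/(natf_mul_eq0 pchar0); apply.
Qed.

Lemma delta_lie1 (f : series K 1) : is_lie f -> delta f = szero.
Proof.
move=> lie_f; apply: functional_extensionality => -[|a [|b w]]; rewrite delta1E /szero.
- by rewrite (is_lie_nil lie_f) mulr0.
- by rewrite delta1_coef_pure ?mul0r //; case: (I2_cases a) => ->.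
- by rewrite is_lie1_nseq ?mulr0.
Qed.

Lemma tr_zero_delta1 (g : series K 1) :
  tr_zero (delta g) <-> forall d, g (nseq d.+2 ord0) = 0.
Proof.
rewrite tr_zeroP //; split=> [delta0 d|g0 [|a [|b w]] // _].
- have := delta0 (ord0 :: nseq d.+1 ord_max) isT.
  rewrite cycsum_delta1 delta1E mem_head in_cons mem_nseq eqxx orbT /= size_nseq.
  rewrite subrr sub0r mulN1r => /(natf_mul_eq0 pchar0 (ltn0Sn _))/eqP.
  by rewrite oppr_eq0 => /eqP.
- by rewrite cycsum_delta1 delta1E delta1_coef_pure ?mul0r ?mulr0 //; case: (I2_cases a) => ->.
- by rewrite cycsum_delta1 delta1E g0 !mulr0.
Qed.

Lemma tr_ker_delta1 (f : series K 1) :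
  tr_zero (delta f) <-> exists c, tr_zero (sadd f (sopp (sscale c (gen ord0)))).
Proof.
rewrite tr_zero_delta1; split=> [f0|[c /tr_zero1P fc0] d].
  exists (f [:: ord0]); apply/tr_zero1P => -[|a [|b w]] // _.
    by rewrite /sadd /sopp /sscale /gen (ord1 a) eqxx mulr1 subrr.
  by rewrite /sadd /sopp /sscale /gen (word1_nseq (a :: b :: w)) f0 mulr0 subr0.
by have := fc0 (nseq d.+2 ord0) isT; rewrite /sadd /sopp /sscale /gen mulr0 subr0.
Qed.

End DegreeOne.

Definition xyx (a b : nat) : seq 'I_2 := nseq a ord0 ++ ord_max :: nseq b ord0.

Section KerDelta2.
Variables (K : fieldType) (F : series K 2).
Hypothesis deltaF0 : delta F = szero.

Lemma kerdelta2_contract v :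
  ord0 \in v -> ord_max \in v -> F (map contract01 v) = F (map contract12 v).
Proof.
move=> v0 v2; have := congr1 (fun h => h v) deltaF0.
by rewrite delta2E v0 v2 !mul1r => /eqP; rewrite subr_eq0 eq_sym => /eqP.
Qed.

Lemma kerdelta2_xpow d : F (nseq d.+1 ord0) = 0.
Proof.
have := congr1 (fun h => h (nseq d.+1 ord0)) deltaF0; rewrite delta2E !mem_nseq !map_nseq /=.
by rewrite mul0r mul1r sub0r => /eqP; rewrite oppr_eq0 => /eqP.
Qed.

Lemma kerdelta2_ypow d : F (nseq d.+1 ord_max) = 0.
Proof.
have := congr1 (fun h => h (nseq d.+1 ord_max)) deltaF0; rewrite delta2E !mem_nseq !map_nseq /=.
by rewrite mul0r mul1r subr0.
Qed.

(* Both words are contractions of words in 'I_3 whose other contraction is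
   x^a y y x^b. *)
Lemma kerdelta2_xyx_shift a b : (0 < a + b)%N -> F (xyx a.+1 b) = F (xyx a b.+1).
Proof.
move=> ab_gt0; pose v := nseq a ord0 ++ l1 :: ord_max :: nseq b ord0.
pose v' := nseq a ord0 ++ ord_max :: l1 :: nseq b ord0.
have mem0 (s : seq 'I_3) : ord0 \notin s -> ord0 \in nseq a ord0 ++ s ++ nseq b ord0.
  by move=> s0; rewrite !mem_cat (negbTE s0) !mem_nseq eqxx !andbT /=; lia.
have -> : xyx a.+1 b = map contract01 v.
  by rewrite /v /xyx map_cat /= !map_nseq; elim: (a) => //= a' ->.
have -> : xyx a b.+1 = map contract01 v' by rewrite /v' /xyx map_cat /= !map_nseq.
rewrite !kerdelta2_contract ?(mem0 [:: l1; ord_max]) ?(mem0 [:: ord_max; l1]) //.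
- by rewrite /v /v' !map_cat.
- by rewrite mem_cat !inE eqxx !orbT.
- by rewrite mem_cat !inE eqxx !orbT.
Qed.

Lemma kerdelta2_xyx a b : (2 <= a + b)%N -> F (xyx a b) = F (xyx 0 (a + b)).
Proof.
elim: a b => [//|a IHa] b ab_ge2.
by rewrite kerdelta2_xyx_shift ?IHa -?addSnnS //; move: ab_ge2; rewrite addSn.
Qed.

(* Lowering every letter y but one to the middle letter of 'I_3 contracts it
   to x on one side and keeps it on the other. *)
Lemma kerdelta2_one_y u : ord0 \in u -> ord_max \in u ->
  exists a b, size u = (a + b).+1 /\ F u = F (xyx a b).
Proof.
move=> u0 y_u; have [p1 [p2 def_u]] : exists p1 p2, u = p1 ++ ord_max :: p2.
  by case/splitPr: y_u => p1 p2; exists p1, p2.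
rewrite {u y_u}def_u in u0 *.
pose lower (c : 'I_2) : 'I_3 := if c == ord0 then ord0 else l1.
pose v := map lower p1 ++ ord_max :: map lower p2.
exists (size p1), (size p2); split; first by rewrite size_cat /= addnS.
have lower_x p : map (contract01 \o lower) p = nseq (size p) ord0.
  by elim: p => //= c p ->; rewrite /lower; case: (c == ord0).
have lower_id p : map (contract12 \o lower) p = p.
  by elim: p => //= c p ->; case: (I2_cases c) => ->.
have -> : xyx (size p1) (size p2) = map contract01 v by rewrite map_cat /= -!map_comp !lower_x.
have {1}-> : p1 ++ ord_max :: p2 = map contract12 v by rewrite map_cat /= -!map_comp !lower_id.
rewrite kerdelta2_contract // ?mem_cat ?mem_head ?orbT //.
by move: u0; rewrite !mem_cat !inE /= => /orP[] /(map_f lower) ->; rewrite ?orbT.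
Qed.

Lemma kerdelta2_mixed u : ord0 \in u -> ord_max \in u -> (3 <= size u)%N ->
  F u = F (xyx 0 (size u).-1).
Proof.
move=> u0 u2; have [a [b [-> ->]]] := kerdelta2_one_y u0 u2.
by move=> ab_ge2; rewrite kerdelta2_xyx.
Qed.

Lemma kerdelta2_pure u : u != [::] -> ~~ ((ord0 \in u) && (ord_max \in u)) -> F u = 0.
Proof.
case: u => // c u _; rewrite negb_and => /orP[] u_pure.
  by rewrite (word2_nseq_max u_pure) kerdelta2_ypow.
by rewrite (word2_nseq0 u_pure) kerdelta2_xpow.
Qed.

End KerDelta2.

Definition xy_bracket {K : fieldType} : series K 2 := sbr (gen ord0) (gen ord_max).

Section KerDelta2Lie.
Variable K : fieldType.
Hypothesis pchar0 : [pchar K] =i pred0.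

Lemma xy_bracketE w :
  xy_bracket w = (w == [:: ord0; ord_max])%:R - (w == [:: ord_max; ord0])%:R :> K.
Proof. by rewrite /xy_bracket /sbr !(@smul_mono K 2 [:: _] [:: _]). Qed.

Lemma xy_bracket_size w : size w != 2 -> xy_bracket w = 0 :> K.
Proof.
by move=> size_w; rewrite xy_bracketE !(introF eqP) ?subrr // => w_eq; rewrite w_eq in size_w.
Qed.

Lemma is_lie_xy_bracket : is_lie (@xy_bracket K).
Proof. exact: is_lie_homogeneous (lp_br (lp_gen _) (lp_gen _)) xy_bracket_size. Qed.

Lemma delta_xy_bracket : delta (@xy_bracket K) = szero.
Proof.
apply: functional_extensionality => w; rewrite delta2E /szero.
have [size_w|size_w] := eqVneq (size w) 2.
  case: w size_w => [|a [|b [|]]] // _.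
  by case: (I3_cases a) => ->; case: (I3_cases b) => ->; rewrite !xy_bracketE /=; ring.
by rewrite !xy_bracket_size ?size_map // !mulr0 subr0.
Qed.

Lemma lie_kerdelta2_size_gt2 (f : series K 2) u : is_lie f -> delta f = szero ->
  (3 <= size u)%N -> f u = 0.
Proof.
move=> lie_f deltaf0 size_u; have u_nil : u != [::] by case: u size_u.
have [/andP[u0 u2]|] := boolP ((ord0 \in u) && (ord_max \in u)); last first.
  move=> u_pure; exact: (kerdelta2_pure deltaf0 u_nil u_pure).
rewrite (kerdelta2_mixed deltaf0) //; set v := xyx 0 (size u).-1.
have size_v : size v = size u by rewrite /v /xyx /= size_nseq; lia.
have v_mixed k : (ord0 \in rot k v) && (ord_max \in rot k v).
  by rewrite !mem_rot /v /xyx /= !inE mem_nseq eqxx /= !andbT; lia.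
have := is_lie_cycsum lie_f (v := v); rewrite size_v => /(_ (ltnW size_u)).
rewrite cycsum_const => [/(natf_mul_eq0 pchar0)|k]; first by apply; lia.
have /andP[v0 v2] := v_mixed k.
by rewrite (kerdelta2_mixed deltaf0 v0 v2) size_rot size_v // ltnW.
Qed.

Lemma lie_kerdelta2 (f : series K 2) : is_lie f -> delta f = szero ->
  f = sscale (f [:: ord0; ord_max]) xy_bracket.
Proof.
move=> lie_f deltaf0; apply: functional_extensionality => w; rewrite /sscale.
case: w => [|a [|b [|c w]]].
- by rewrite is_lie_nil // xy_bracket_size ?mulr0.
- by rewrite xy_bracket_size ?mulr0 // (kerdelta2_pure deltaf0) //; case: (I2_cases a) => ->.
- have := @is_lie_cycsum K 2 f [:: ord0; ord_max] lie_f isT.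
  rewrite /cycsum big_ord_recr big_ord1 /rot /= => /eqP; rewrite addr_eq0 => /eqP f_xy.
  case: (I2_cases a) => ->; case: (I2_cases b) => ->; rewrite xy_bracketE /=.
  + by rewrite (kerdelta2_xpow deltaf0 1); ring.
  + by ring.
  + by rewrite f_xy; ring.
  + by rewrite (kerdelta2_ypow deltaf0 1); ring.
- by rewrite (lie_kerdelta2_size_gt2 lie_f deltaf0) ?xy_bracket_size ?mulr0.
Qed.

Lemma xy_bracket_notin_delta_lie1 :
  ~ exists g : series K 1, is_lie g /\ delta g = xy_bracket.
Proof.
case=> g [/(delta_lie1 pchar0) -> /(congr1 (fun h => h [:: ord0; ord_max]))].
by rewrite xy_bracketE /= subr0 => /eqP; rewrite eq_sym oner_eq0.
Qed.

End KerDelta2Lie.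

Section KerDelta2Trace.
Variable K : fieldType.
Hypothesis pchar0 : [pchar K] =i pred0.

Lemma tr_zero_delta2 (f : series K 2) : tr_zero (delta f) <-> delta (cyc f) = szero.
Proof.
rewrite tr_zeroP //; split=> [delta0|deltacyc0 v _]; last by rewrite cycsum_delta2 deltacyc0.
apply: functional_extensionality => -[|l v]; last by rewrite -cycsum_delta2 delta0.
by rewrite delta2E !in_nil !mul0r subr0.
Qed.

Lemma cyc_kerdelta2_mixed (f : series K 2) u : delta (cyc f) = szero ->
  ord0 \in u -> ord_max \in u -> cyc f u = cyc f (xyx 0 (size u).-1).
Proof.
move=> deltacyc0; case: u => [|a [|b [|c u]]] //.
- by case: (I2_cases a) => ->; rewrite !inE.
- case: (I2_cases a) => ->; case: (I2_cases b) => -> //= _ _.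
  by rewrite /cyc -(cycsum_rot 1).
- by move=> u0 u2; rewrite (kerdelta2_mixed deltacyc0).
Qed.

Lemma tr_ker_delta2 (f : series K 2) :
  tr_zero (delta f) <-> exists g : series K 1, tr_zero (sadd f (sopp (delta g))).
Proof.
split=> [/tr_zero_delta2 deltacyc0|[g /(tr_zeroP pchar0) fg0]].
  exists (fun w => - cyc f (xyx 0 (size w).-1) / (size w)%:R).
  apply/(tr_zeroP pchar0) => u u_nil.
  rewrite cycsum_add cycsum_opp cycsum_delta1 delta1E size_nseq -/(cyc f u).
  have [/andP[u0 u2]|u_pure] := boolP ((ord0 \in u) && (ord_max \in u)).
    rewrite u0 u2 (cyc_kerdelta2_mixed deltacyc0 u0 u2) /=.
    have : (size u)%:R != 0 :> K by rewrite natf_gt0_neq0 // lt0n size_eq0.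
    by move=> size_neq0; field.
  by rewrite (kerdelta2_pure deltacyc0) // delta1_coef_pure // mul0r mulr0 subr0.
apply/tr_zero_delta2.
have -> : cyc f = cyc (delta g).
  apply: functional_extensionality => -[|l u]; first by rewrite /cyc /cycsum !big_ord0.
  by apply/eqP; rewrite -subr_eq0 -cycsum_opp -cycsum_add fg0.
by apply: functional_extensionality => v; rewrite -cycsum_delta2 delta_delta1 /cycsum big1.
Qed.

End KerDelta2Trace.

Theorem theorem2p7 (K : fieldType) (hK : [pchar K] =i pred0) :
  (forall f : series K 1, is_lie f -> delta f = szero)
  /\
  (forall f : series K 1,
     tr_zero (delta f) <->
     exists c : K, tr_zero (sadd f (sopp (sscale c (gen (ord0 : 'I_1))))))
  /\
  (let X : series K 2 := sbr (gen (ord0 : 'I_2)) (gen (ord_max : 'I_2)) in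
   is_lie X /\ delta X = szero /\
   ~ (exists g : series K 1, is_lie g /\ delta g = X) /\
   (forall f : series K 2, is_lie f -> delta f = szero ->
      exists (c : K) (g : series K 1),
        is_lie g /\ f = sadd (sscale c X) (delta g)))
  /\
  (forall f : series K 2,
     tr_zero (delta f) <->
     exists g : series K 1, tr_zero (sadd f (sopp (delta g)))).
Proof.
split; first exact: delta_lie1.
split; first exact: tr_ker_delta1.
split; last exact: tr_ker_delta2.
move=> X; rewrite {}/X -/(@xy_bracket K).
split; first exact: is_lie_xy_bracket.
split; first exact: delta_xy_bracket.
split; first exact: xy_bracket_notin_delta_lie1.
move=> f lie_f deltaf0; exists (f [:: ord0; ord_max]), szero.
split; first exact: is_lie_szero.
rewrite (delta_lie1 hK (is_lie_szero K 1)) {1}(lie_kerdelta2 hK lie_f deltaf0).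
by apply: functional_extensionality => w; rewrite /sadd /szero addr0.
Qed.
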